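(* For any cardinal $\kappa$, there exists a set of cardinality $\kappa$ consisting of pairwise non-isomorphic groups, each of which is not finitely generated, not strongly bounded, and SB-generated.
   Context: A subset of a group $G$ is strongly bounded if it has finite diameter in every left-invariant metric on $G$; a group is strongly bounded if it is a strongly bounded subset of itself, and SB-generated if it is generated by a strongly bounded subset. *)

From mathcomp Require Import all_boot.
From Stdlib Require Import Reals.

Set Implicit Arguments.
Unset Strict Implicit.
Unset Printing Implicit Defensive.

Local Open Scope group_scope.

Definition left_invariant_metric (G : groupType) (d : G -> G -> R) : Prop :=
  (forall x y : G, (0 <= d x y)%R) /\
  (forall x y : G, d x y = 0%R <-> x = y) /\
  (forall x y : G, d x y = d y x) /\
  (forall x y z : G, (d x z <= d x y + d y z)%R) /\
  (forall g x y : G, d (g * x) (g * y) = d x y).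

Definition finite_diameter (G : groupType) (d : G -> G -> R) (A : G -> Prop) : Prop :=
  exists M : R, forall x y : G, A x -> A y -> (d x y <= M)%R.

Definition strongly_bounded_subset (G : groupType) (A : G -> Prop) : Prop :=
  forall d : G -> G -> R, left_invariant_metric d -> finite_diameter d A.

Definition strongly_bounded (G : groupType) : Prop :=
  strongly_bounded_subset (fun _ : G => True).

Definition generates (G : groupType) (A : G -> Prop) : Prop :=
  forall S : G -> Prop,
    S 1 ->
    (forall x y : G, S x -> S y -> S (x * y)) ->
    (forall x : G, S x -> S x^-1) ->
    (forall x : G, A x -> S x) ->
    forall g : G, S g.

Definition finitely_generated (G : groupType) : Prop :=
  exists s : seq G, generates (fun x : G => x \in s).

Definition SB_generated (G : groupType) : Prop :=
  exists A : G -> Prop, strongly_bounded_subset A /\ generates A.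

Definition group_isomorphic (G H : groupType) : Prop :=
  exists f : G -> H, bijective f /\ (forall x y : G, f (x * y) = f x * f y).

(* Each group is an unrestricted wreath product W(X) = A5^(Z x X) >| Z, with Z
   shifting the first coordinate.  The projection onto Z gives an unbounded
   left-invariant metric, and W(X) is uncountable, hence not finitely generated.
   The base A5^(Z x X) is strongly bounded for any left-invariant metric d: for
   some k, every configuration on the block B_k = 2^k (2Z + 1) is realised by an
   element of d-length at most k (otherwise glue counterexamples along the
   disjoint blocks).  As every element of A5 is a product of two conjugates of a
   fixed double transposition, every configuration supported on B_k is a product
   of two boundedly conjugated copies of one fixed element, and finitely many
   translates of B_k cover Z.  So W(X) is generated by the strongly bounded set
   base + {t}.  For non-isomorphism, well-order the index set and take
   X_i = P(Sum_{j<i} W(X_j)); by Cantor's theorem W(X_i) does not inject into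
   W(X_j) for j < i. *)

From HB Require Import structures.
From mathcomp Require Import all_boot boolp wochoice.
From Stdlib Require Import Reals ZArith Lia Lra FunctionalExtensionality Eqdep.

Set Implicit Arguments.
Unset Strict Implicit.
Unset Printing Implicit Defensive.

Local Open Scope group_scope.

Section LengthFunction.
Variables (G : groupType) (d : G -> G -> R).
Hypothesis d_metric : left_invariant_metric d.

Definition len (g : G) : R := d 1 g.

Lemma len1 : len 1 = 0%R.
Proof. by have [_ [d0 _]] := d_metric; apply/d0. Qed.

Lemma len_mul x y : (len (x * y) <= len x + len y)%R.
Proof.
have [_ [_ [_ [d_tri d_inv]]]] := d_metric.
apply: Rle_trans (d_tri _ x _) _.
by rewrite /len -{2}(mulg1 x) d_inv; apply: Rle_refl.
Qed.

Lemma lenV x : len x^-1 = len x.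
Proof.
have [_ [_ [d_sym [_ d_inv]]]] := d_metric.
by rewrite /len -(d_inv x) mulg1 mulgV d_sym.
Qed.

Lemma dist_le_len x y : (d x y <= len x + len y)%R.
Proof.
have [_ [_ [d_sym [d_tri _]]]] := d_metric.
by rewrite /len -(d_sym x); apply: d_tri.
Qed.

Lemma len_conj x y : (len (x * y * x^-1) <= len x + len y + len x)%R.
Proof.
apply: Rle_trans (len_mul _ _) _; rewrite lenV.
by apply: Rplus_le_compat_r; apply: len_mul.
Qed.

End LengthFunction.

Section HomToZ.
Variables (G : groupType) (phi : G -> Z).
Hypothesis phiM : {morph phi : x y / x * y >-> (x + y)%Z}.

Definition hom_Z_dist (x y : G) : R :=
  (Rabs (IZR (phi x - phi y)) + (if x == y then 0 else 1))%R.

Lemma hom_Z_dist_metric : left_invariant_metric hom_Z_dist.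
Proof.
rewrite /hom_Z_dist; split; [|split; [|split; [|split]]].
- by move=> x y; have := Rabs_pos (IZR (phi x - phi y)); case: (x == y); lra.
- move=> x y; split; last by move=> ->; rewrite eqxx Z.sub_diag Rabs_R0; lra.
  by case: eqP => // _; have := Rabs_pos (IZR (phi x - phi y)); lra.
- move=> x y; rewrite eq_sym -Rabs_Ropp -opp_IZR.
  by rewrite (_ : (- (phi x - phi y) = phi y - phi x)%Z) //; lia.
- move=> x y z.
  rewrite (_ : (phi x - phi z = (phi x - phi y) + (phi y - phi z))%Z); last by lia.
  have := Rabs_triang (IZR (phi x - phi y)) (IZR (phi y - phi z)); rewrite -plus_IZR.
  case: (eqVneq x z) => [->|nxz]; first by case: (z == y); case: (y == z); lra.
  case: (eqVneq x y) => [<-|_]; last by case: (y == z); lra.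
  by rewrite (negbTE nxz); lra.
- move=> g x y; rewrite (eqtype.inj_eq (mulgI g)) !phiM.
  by rewrite (_ : (phi g + phi x - (phi g + phi y) = phi x - phi y)%Z) //; lia.
Qed.

Lemma hom_onto_Z_not_strongly_bounded :
  (forall m : Z, exists g : G, phi g = m) -> ~ strongly_bounded G.
Proof.
move=> phi_onto /(_ _ hom_Z_dist_metric) [M M_diam].
have [g phi_g] := phi_onto (up M); have [g1 phi_g1] := phi_onto 0%Z.
have := M_diam g g1 I I; rewrite /hom_Z_dist phi_g phi_g1 Z.sub_0_r.
have [up_gt _] := archimed M; have := Rle_abs (IZR (up M)).
by case: (_ == _); lra.
Qed.

End HomToZ.

Section FinitelyGenerated.
Variables (G : groupType) (s : seq G).

Definition word_eval (w : seq (nat * bool)) : G :=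
  \big[*%g/1]_(a <- w) (if a.2 then nth 1 s a.1 else (nth 1 s a.1)^-1).

Lemma word_eval_cat w1 w2 : word_eval (w1 ++ w2) = word_eval w1 * word_eval w2.
Proof. by rewrite /word_eval big_cat. Qed.

Lemma word_eval_rev_flip w :
  word_eval (rev [seq (a.1, ~~ a.2) | a <- w]) = (word_eval w)^-1.
Proof.
elim: w => [|a w IH]; first by rewrite /word_eval !big_nil invg1.
rewrite map_cons rev_cons -cats1 word_eval_cat IH /word_eval big_seq1 big_cons /=.
by rewrite invgM; case: a.2; rewrite ?invgK.
Qed.

Lemma generates_words :
  generates (fun x => x \in s) -> forall g : G, exists w, word_eval w = g.
Proof.
apply.
- by exists [::]; rewrite /word_eval big_nil.
- by move=> x y [w1 <-] [w2 <-]; exists (w1 ++ w2); rewrite word_eval_cat.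
- move=> x [w <-]; exists (rev [seq (a.1, ~~ a.2) | a <- w]).
  exact: word_eval_rev_flip.
- by move=> x xs; exists [:: (index x s, true)]; rewrite /word_eval big_seq1 nth_index.
Qed.

End FinitelyGenerated.

Lemma finitely_generated_countable (G : groupType) :
  finitely_generated G -> exists f : nat -> G, forall g, exists n, f n = g.
Proof.
move=> [s /generates_words gen].
exists (fun n => if unpickle n is Some w then word_eval s w else 1) => g.
by have [w <-] := gen g; exists (pickle w); rewrite pickleK.
Qed.

Section Wreath.
Variables (Q : groupType) (X : Type).

(* (b, m) stands for b t^m, where t^m shifts lamp coordinates by m; hence
   (b, m) (c, l) = (b (t^m c t^-m), m + l). *)
Definition wreath := ((Z -> X -> Q) * Z)%type.

HB.instance Definition _ := gen_eqMixin wreath.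
HB.instance Definition _ := gen_choiceMixin wreath.

Definition wreath_mul (a b : wreath) : wreath :=
  (fun n x => a.1 n x * b.1 (n - a.2)%Z x, (a.2 + b.2)%Z).
Definition wreath_one : wreath := (fun _ _ => 1, 0%Z).
Definition wreath_inv (a : wreath) : wreath :=
  (fun n x => (a.1 (n + a.2)%Z x)^-1, (- a.2)%Z).

Lemma lamps_ext (f g : Z -> X -> Q) : (forall n x, f n x = g n x) -> f = g.
Proof. by move=> fg; do 2 apply: functional_extensionality => ?; apply: fg. Qed.

Lemma wreath_mulA : associative wreath_mul.
Proof.
move=> [a m] [b k] [c l]; congr (_, _); last by rewrite /= Z.add_assoc.
by apply: lamps_ext => n x /=; rewrite mulgA Z.sub_add_distr.
Qed.

Lemma wreath_mul1 : left_id wreath_one wreath_mul.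
Proof.
by move=> [a m]; congr (_, _); apply: lamps_ext => n x /=; rewrite mul1g Z.sub_0_r.
Qed.

Lemma wreath_mulg1 : right_id wreath_one wreath_mul.
Proof.
move=> [a m]; congr (_, _); last exact: Z.add_0_r.
by apply: lamps_ext => n x; apply: mulg1.
Qed.

Lemma wreath_mulV : left_inverse wreath_one wreath_inv wreath_mul.
Proof.
move=> [a m]; congr (_, _); last by rewrite /= Z.add_opp_diag_l.
by apply: lamps_ext => n x /=; rewrite Z.sub_opp_r mulVg.
Qed.

Lemma wreath_mulgV : right_inverse wreath_one wreath_inv wreath_mul.
Proof.
move=> [a m]; congr (_, _); last by rewrite /= Z.add_opp_diag_r.
by apply: lamps_ext => n x /=; rewrite Z.sub_add mulgV.
Qed.

HB.instance Definition _ :=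
  isGroup.Build wreath wreath_mulA wreath_mul1 wreath_mulg1 wreath_mulV wreath_mulgV.

Definition lamps (b : Z -> X -> Q) : wreath := (b, 0%Z).
Definition shift (j : Z) : wreath := (fun _ _ => 1, j).

Lemma lampsM b c : lamps b * lamps c = lamps (fun n x => b n x * c n x).
Proof. by congr (_, _); apply: lamps_ext => n x; rewrite /= Z.sub_0_r. Qed.

Lemma lampsV b : (lamps b)^-1 = lamps (fun n x => (b n x)^-1).
Proof. by congr (_, _); apply: lamps_ext => n x; rewrite /= Z.add_0_r. Qed.

Lemma lamps1 : lamps (fun _ _ => 1) = 1.
Proof. by []. Qed.

Lemma shiftD i j : shift i * shift j = shift (i + j).
Proof. by congr (_, _); apply: lamps_ext => n x; apply: mul1g. Qed.

Lemma shiftV j : (shift j)^-1 = shift (- j).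
Proof. by congr (_, _); apply: lamps_ext => n x; apply: invg1. Qed.

Lemma shift_conj_lamps j b :
  shift j * lamps b * (shift j)^-1 = lamps (fun n x => b (n - j)%Z x).
Proof.
rewrite shiftV; congr (_, _); last by rewrite /= Z.add_0_r Z.add_opp_diag_r.
by apply: lamps_ext => n x /=; rewrite mul1g mulg1.
Qed.

Lemma lamps_shift_decomp (g : wreath) : g = lamps g.1 * shift g.2.
Proof. by case: g => b m; congr (_, _); apply: lamps_ext => n x; rewrite /= mulg1. Qed.

Lemma wreath_not_strongly_bounded : ~ strongly_bounded wreath.
Proof.
apply: (@hom_onto_Z_not_strongly_bounded _ (fun g : wreath => g.2)) => // m.
by exists (shift m : wreath).
Qed.

Lemma wreath_uncountable (q : Q) (x0 : X) :
  q != 1 -> ~ exists f : nat -> wreath, forall g, exists n, f n = g.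
Proof.
move=> q_neq1 [f f_onto].
pose diag n x := if (f (Z.to_nat n)).1 n x == q then 1 else q.
have [m fm] := f_onto (lamps diag).
have := congr1 (fun g : wreath => g.1 (Z.of_nat m) x0) fm.
rewrite /= /diag Nat2Z.id; case: eqP => [->|//].
by move/eqP; rewrite (negbTE q_neq1).
Qed.

Lemma wreath_not_finitely_generated (q : Q) (x0 : X) :
  q != 1 -> ~ finitely_generated wreath.
Proof.
by move=> q_neq1 /finitely_generated_countable; apply: wreath_uncountable q_neq1.
Qed.

Definition lamp_at (q : Q) (y : X) : wreath :=
  lamps (fun _ x => if pselect (x = y) then q else 1).

Lemma lamp_at_inj (q : Q) : q != 1 -> injective (lamp_at q).
Proof.
move=> q_neq1 y y' /(congr1 (fun g : wreath => g.1 0%Z y)) /=.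
case: pselect => [y_eq|[]//]; case: pselect => // y_neq /eqP.
by rewrite (negbTE q_neq1).
Qed.

End Wreath.

Arguments shift {Q X}.

Definition dyadic_block (k : nat) (n : Z) : Prop :=
  exists m : Z, n = (2 ^ Z.of_nat k * (2 * m + 1))%Z.

Lemma dyadic_block_disjoint k k' n :
  dyadic_block k n -> dyadic_block k' n -> k = k'.
Proof.
wlog lt_kk' : k k' / (k < k')%coq_nat.
  move=> wlog_lt nk nk'; case: (Nat.lt_total k k') => [|[//|]] lt.
  - exact: wlog_lt nk nk'.
  - by apply/esym; apply: wlog_lt nk' nk.
set t := (2 ^ (Z.of_nat k' - Z.of_nat k - 1))%Z.
have pow_k' : (2 ^ Z.of_nat k' = 2 ^ Z.of_nat k * (2 * t))%Z.
  rewrite -Z.pow_succ_r -?Z.pow_add_r; try lia.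
  by congr (2 ^ _)%Z; lia.
have p_neq0 : (2 ^ Z.of_nat k <> 0)%Z by apply: Z.pow_nonzero; lia.
move=> [m ->] [m']; rewrite pow_k' -Z.mul_assoc => /(Z.mul_cancel_l _ _ _ p_neq0).
rewrite -Z.mul_assoc; move: (t * _)%Z => s; lia.
Qed.

Lemma dyadic_block_cover k :
  exists J : nat,
    forall n : Z, exists2 j : nat, (j < J)%nat & dyadic_block k (n - Z.of_nat j).
Proof.
set p := (2 ^ Z.of_nat k)%Z; have p_gt0 : (0 < p)%Z by apply: Z.pow_pos_nonneg; lia.
exists (Z.to_nat (2 * p)) => n.
have := Z.mod_pos_bound (n - p) (2 * p); have := Z.div_mod (n - p) (2 * p).
set q := ((n - p) / (2 * p))%Z; set r := ((n - p) mod (2 * p))%Z => n_eq r_bound.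
exists (Z.to_nat r); first by apply/ltP; lia.
by exists q; rewrite Z2Nat.id; lia.
Qed.

Definition covered_by_two_conjugates (Q : groupType) (gam : Q) :=
  forall q : Q, exists r1 r2 : Q, q = r1 * gam * r1^-1 * (r2 * gam * r2^-1).

Section BoundedLamps.
Variables (Q : groupType) (gam : Q).
Hypothesis gam_conj2 : covered_by_two_conjugates gam.
Variable X : Type.
Variable d : wreath Q X -> wreath Q X -> R.
Hypothesis d_metric : left_invariant_metric d.
Variable block : nat -> Z -> Prop.
Hypothesis block_disjoint : forall k k' n, block k n -> block k' n -> k = k'.
Hypothesis block_cover : forall k,
  exists J : nat, forall n, exists2 j : nat, (j < J)%nat & block k (n - Z.of_nat j).

Local Notation len := (len d).

Definition supported (P : Z -> Prop) (h : Z -> X -> Q) :=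
  forall n x, ~ P n -> h n x = 1.

Definition bounded_on (P : Z -> Prop) :=
  exists M, forall h, supported P h -> (len (lamps h) <= M)%R.

Lemma bounded_on_sub (P P' : Z -> Prop) :
  (forall n, P n -> P' n) -> bounded_on P' -> bounded_on P.
Proof.
move=> sPP' [M HM]; exists M => h hP; apply: HM => n x.
by move/(contra_not (sPP' n)); apply: hP.
Qed.

Lemma bounded_on_empty : bounded_on (fun _ => False).
Proof.
exists 0%R => h h1.
rewrite (_ : h = fun _ _ => 1); last by apply: lamps_ext => n x; apply: h1.
by rewrite lamps1 len1 //; apply: Rle_refl.
Qed.

Lemma bounded_on_union (P P' : Z -> Prop) :
  bounded_on P -> bounded_on P' -> bounded_on (fun n => P n \/ P' n).
Proof.
move=> [M HM] [M' HM']; exists (M + M')%R => h hPP'.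
pose hP n x := if pselect (P n) then h n x else 1.
pose hP' n x := if pselect (P n) then 1 else h n x.
have -> : lamps h = lamps hP * lamps hP'.
  rewrite lampsM; congr lamps; apply: lamps_ext => n x; rewrite /hP /hP'.
  by case: pselect => Pn; rewrite ?mulg1 ?mul1g.
apply: Rle_trans (len_mul d_metric _ _) (Rplus_le_compat _ _ _ _ (HM _ _) (HM' _ _)).
- by move=> n x nP; rewrite /hP; case: pselect.
- move=> n x nP'; rewrite /hP'; case: pselect => // nP.
  by apply: hPP' => -[].
Qed.

Lemma bounded_on_shift (P : Z -> Prop) (j : Z) :
  bounded_on P -> bounded_on (fun n => P (n - j)%Z).
Proof.
move=> [M HM]; exists (len (shift j) + M + len (shift j))%R => h hP.
have -> : lamps h = shift j * lamps (fun n => h (n + j)%Z) * (shift j)^-1.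
  by rewrite shift_conj_lamps; congr lamps; apply: lamps_ext => n x; rewrite Z.sub_add.
apply: Rle_trans (len_conj d_metric _ _) _.
apply: Rplus_le_compat_r; apply: Rplus_le_compat_l; apply: HM => n x nP.
by apply: hP; rewrite Z.add_simpl_r.
Qed.

Definition realizable (k : nat) := forall p : Z -> X -> Q,
  exists2 g, (len (lamps g) <= INR k)%R & forall n, block k n -> g n = p n.

Lemma exists_realizable : exists k, realizable k.
Proof.
apply: contrapT => /forallNP not_realizable.
have /choice [P HP] : forall k, exists p : Z -> X -> Q, forall g,
    (len (lamps g) <= INR k)%R -> exists2 n, block k n & g n <> p n.
  move=> k; have /existsNP [p Hp] := not_realizable k; exists p => g g_small.
  apply: contrapT => /forall2NP agree; apply: Hp; exists g => // n kn.
  by case: (agree n) => // /contrapT.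
pose glued n := if pselect (exists k, block k n) is left kn then P (projT1 (cid kn)) n
                else fun _ => 1.
have gluedE k n : block k n -> glued n = P k n.
  rewrite /glued => kn; case: pselect => [kn'|[]]; last by exists k.
  by case: (cid kn') => k' k'n /=; rewrite (block_disjoint k'n kn).
have [k k_large] := INR_unbounded (len (lamps glued)).
have [n kn] := HP k glued (Rlt_le _ _ k_large).
by rewrite (gluedE _ _ kn).
Qed.

Lemma realizable_bounded k : realizable k -> bounded_on (block k).
Proof.
move=> k_real; pose gam_k n (x : X) := if pselect (block k n) then gam else 1.
pose c := (INR k + len (lamps gam_k) + INR k)%R; exists (c + c)%R => h h_supp.
have /choice [r r_spec] : forall nx : Z * X,
    exists r : Q * Q, h nx.1 nx.2 = r.1 * gam * r.1^-1 * (r.2 * gam * r.2^-1).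
  by move=> nx; have [r1 [r2 E]] := gam_conj2 (h nx.1 nx.2); exists (r1, r2).
have [g1 g1_small g1_r] := k_real (fun n x => (r (n, x)).1).
have [g2 g2_small g2_r] := k_real (fun n x => (r (n, x)).2).
have -> : lamps h = lamps g1 * lamps gam_k * (lamps g1)^-1
                     * (lamps g2 * lamps gam_k * (lamps g2)^-1).
  rewrite !lampsV !lampsM; congr lamps; apply: lamps_ext => n x; rewrite /gam_k.
  case: pselect => kn; last by rewrite h_supp // !mulg1 !mulgV mul1g.
  by rewrite g1_r // g2_r //; apply: (r_spec (n, x)).
apply: Rle_trans (len_mul d_metric _ _) _.
apply: Rle_trans (Rplus_le_compat _ _ _ _ (len_conj d_metric _ _) (len_conj d_metric _ _)) _.
rewrite /c; lra.
Qed.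

Lemma lamps_bounded : exists M, forall b, (len (lamps b) <= M)%R.
Proof.
have [k k_real] := exists_realizable; have [J cover] := block_cover k.
have : bounded_on (fun n => exists2 j : nat, (j < J)%nat & block k (n - Z.of_nat j)).
  elim: J {cover} => [|J IH]; first by apply: bounded_on_sub bounded_on_empty => n [].
  have := bounded_on_union IH (bounded_on_shift (Z.of_nat J) (realizable_bounded k_real)).
  apply: bounded_on_sub => n [j]; rewrite ltnS leq_eqVlt => /orP[/eqP-> | lt_jJ] kn.
  - by right.
  - by left; exists j.
by case=> M HM; exists M => b; apply: HM => n x []; apply: cover.
Qed.

End BoundedLamps.

Lemma wreath_SB_generated (Q : groupType) (gam : Q) (X : Type) :
  covered_by_two_conjugates gam -> SB_generated (wreath Q X).
Proof.
move=> gam_conj2; exists (fun g : wreath Q X => g.2 = 0%Z \/ g = shift 1).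
split=> [d d_metric | S S1 SM SV SA].
- have [M lamps_le] :=
    lamps_bounded gam_conj2 d_metric dyadic_block_disjoint dyadic_block_cover.
  pose M' := Rmax M (len d (shift 1)).
  have A_le g : g.2 = 0%Z \/ g = shift 1 -> (len d g <= M')%R.
    case: g => b m /= [-> | ->]; [exact: Rle_trans (lamps_le b) (Rmax_l _ _) | exact: Rmax_r].
  exists (M' + M')%R => x y /A_le x_le /A_le y_le.
  exact: Rle_trans (dist_le_len d_metric x y) (Rplus_le_compat _ _ _ _ x_le y_le).
- have S_shift_nat (n : nat) : S (shift (Z.of_nat n)).
    elim: n => [|n IH] //; rewrite Nat2Z.inj_succ -Z.add_1_r -shiftD.
    by apply: SM => //; apply: SA; right.
  have S_shift (m : Z) : S (shift m).
    case: m => [|p|p]; first exact: (S_shift_nat 0%nat).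
    + by rewrite -positive_nat_Z; apply: S_shift_nat.
    + by rewrite -Pos2Z.opp_pos -shiftV -positive_nat_Z; apply: SV.
  by move=> g; rewrite (lamps_shift_decomp g); apply: SM => //; apply: SA; left.
Qed.

Definition inversions (s : seq nat) : nat :=
  count (fun ij => (ij.1 < ij.2) && (nth 0 s ij.2 < nth 0 s ij.1))
        [seq (i, j) | i <- iota 0 (size s), j <- iota 0 (size s)].

Definition alt5 : seq (seq nat) :=
  [seq s <- permutations (iota 0 5) | ~~ odd (inversions s)].

Definition pcomp (p q : seq nat) : seq nat := map (nth 0 p) q.
Definition pinv (p : seq nat) : seq nat := map (index^~ p) (iota 0 5).

Lemma alt5_comp_closed : all (fun p => all (fun q => pcomp p q \in alt5) alt5) alt5.
Proof. by vm_compute. Qed.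
Lemma alt5_inv_closed : all (fun p => pinv p \in alt5) alt5.
Proof. by vm_compute. Qed.
Lemma alt5_id : iota 0 5 \in alt5.
Proof. by vm_compute. Qed.
Lemma alt5_pcompA : all (fun p => all (fun q => all (fun r =>
  pcomp p (pcomp q r) == pcomp (pcomp p q) r) alt5) alt5) alt5.
Proof. by vm_compute. Qed.
Lemma alt5_group_laws : all (fun p => [&& pcomp (iota 0 5) p == p, pcomp p (iota 0 5) == p,
  pcomp (pinv p) p == iota 0 5 & pcomp p (pinv p) == iota 0 5]) alt5.
Proof. by vm_compute. Qed.

Definition A5 := {p : seq nat | p \in alt5}.
HB.instance Definition _ := Choice.on A5.

Definition a5_of (p : seq nat) (p_alt : p \in alt5) : A5 := exist _ p p_alt.

Definition a5_mul (p q : A5) : A5 :=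
  a5_of (allP (allP alt5_comp_closed _ (valP p)) _ (valP q)).
Definition a5_inv (p : A5) : A5 := a5_of (allP alt5_inv_closed _ (valP p)).
Definition a5_one : A5 := a5_of alt5_id.

Lemma a5_mulA : associative a5_mul.
Proof.
move=> p q r; apply/val_inj/eqP.
exact: allP (allP (allP alt5_pcompA _ (valP p)) _ (valP q)) _ (valP r).
Qed.

Lemma a5_mul1 : left_id a5_one a5_mul.
Proof. by move=> p; apply/val_inj/eqP; case/and4P: (allP alt5_group_laws _ (valP p)). Qed.
Lemma a5_mulg1 : right_id a5_one a5_mul.
Proof. by move=> p; apply/val_inj/eqP; case/and4P: (allP alt5_group_laws _ (valP p)). Qed.
Lemma a5_mulV : left_inverse a5_one a5_inv a5_mul.
Proof. by move=> p; apply/val_inj/eqP; case/and4P: (allP alt5_group_laws _ (valP p)). Qed.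
Lemma a5_mulgV : right_inverse a5_one a5_inv a5_mul.
Proof. by move=> p; apply/val_inj/eqP; case/and4P: (allP alt5_group_laws _ (valP p)). Qed.

HB.instance Definition _ := isGroup.Build A5 a5_mulA a5_mul1 a5_mulg1 a5_mulV a5_mulgV.

Lemma double_transposition_in_alt5 : [:: 1; 0; 3; 2; 4]%nat \in alt5.
Proof. by vm_compute. Qed.

Definition a5_gam : A5 := a5_of double_transposition_in_alt5.

Lemma a5_gam_neq1 : a5_gam != 1.
Proof. by []. Qed.

Lemma a5_two_conjugates : covered_by_two_conjugates a5_gam.
Proof.
move=> q.
have : all (fun q => has (fun r1 => has (fun r2 => q ==
    pcomp (pcomp (pcomp r1 (val a5_gam)) (pinv r1)) (pcomp (pcomp r2 (val a5_gam)) (pinv r2)))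
    alt5) alt5) alt5 by vm_compute.
move=> /allP /(_ _ (valP q)) /hasP [r1 r1_alt /hasP [r2 r2_alt /eqP q_eq]].
by exists (a5_of r1_alt), (a5_of r2_alt); apply: val_inj.
Qed.

Lemma cantor (C : Type) (h : (C -> Prop) -> C) : ~ injective h.
Proof.
move=> h_inj; pose D c := exists2 P, h P = c & ~ P c.
have nDD : ~ D (h D) by move=> DhD; case: (DhD) => P /h_inj -> nDhD; apply: nDhD DhD.
by apply: (nDD); exists D.
Qed.

Section WellOrder.
Variables (T : eqType) (R : rel T).
Hypothesis R_wo : well_order R.

Definition strict x y := R x y && (x != y).

Lemma strict_total x y : x <> y -> strict x y \/ strict y x.
Proof.
move=> /eqP nxy; have R_chain := wo_chainW (withinW (A := predT) R_wo).
have := R_chain x y isT isT; rewrite /strict nxy eq_sym nxy !andbT.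
by case/orP; [left | right].
Qed.

Lemma strict_wf : well_founded strict.
Proof.
move=> x; apply: contrapT => x_not_acc.
pose not_acc : {pred T} := fun y => ~~ `[< Acc strict y >].
have not_accE y : (y \in not_acc) = ~~ `[< Acc strict y >] by rewrite unfold_in.
have [|z [[z_not_acc z_min] _]] := R_wo (A := not_acc).
  by exists x; rewrite not_accE; apply/asboolP.
move: z_not_acc; rewrite not_accE => /negP; apply; apply/asboolP.
constructor=> y /andP [Ryz nyz]; apply: contrapT => y_not_acc.
have R_anti := wo_chain_antisymmetric (withinW (A := predT) R_wo).
move/negP: nyz; apply; apply/eqP/R_anti => //; rewrite Ryz z_min //.
by rewrite not_accE; apply/asboolP.
Qed.

End WellOrder.

Section Tower.
Variables (Q : groupType) (q : Q).
Hypothesis q_neq1 : q != 1.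
Variables (K : Type) (lt : K -> K -> Prop).
Hypothesis lt_wf : well_founded lt.

Definition tower_step (i : K) (tower_below : forall j, lt j i -> Type) : Type :=
  {j : K & {lt_ji : lt j i & wreath Q (tower_below j lt_ji)}} -> Prop.

Definition tower : K -> Type := Fix lt_wf (fun _ => Type) tower_step.

Lemma towerE i : tower i = ({j : K & {_ : lt j i & wreath Q (tower j)}} -> Prop).
Proof.
rewrite /tower Fix_eq // => k f g fg.
by have -> : f = g by do 2 apply: functional_extensionality_dep => ?; apply: fg.
Qed.

Lemma tower_inhabited i : tower i.
Proof. by rewrite towerE; exact: (fun _ => True). Qed.

Lemma wreath_tower_no_injection i j (f : wreath Q (tower i) -> wreath Q (tower j)) :
  lt j i -> ~ injective f.
Proof.
move=> lt_ji f_inj.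
pose below := {j : K & {_ : lt j i & wreath Q (tower j)}}.
pose embed_below (w : wreath Q (tower j)) : below := existT _ j (existT _ lt_ji w).
have embed_below_inj : injective embed_below.
  by move=> w w' /(inj_pair2 _ _ _ _ _) /(inj_pair2 _ _ _ _ _).
pose cast (P : below -> Prop) : tower i := eq_rect _ (fun T => T) P _ (esym (towerE i)).
have cast_inj : injective cast by rewrite /cast; case: _ / (esym (towerE i)).
apply: (@cantor below (fun P => embed_below (f (lamp_at q (cast P))))).
move=> P P' eq_embed; apply/cast_inj/(lamp_at_inj q_neq1)/f_inj; exact: embed_below_inj.
Qed.

End Tower.

Theorem corollary6p2 :
  forall K : Type@{Group.axioms_.u0},
  exists F : K -> groupType,
    (forall i j : K, i <> j -> ~ group_isomorphic (F i) (F j)) /\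
    (forall i : K,
        ~ finitely_generated (F i) /\
        ~ strongly_bounded (F i) /\
        SB_generated (F i)).
Proof.
move=> K; have [R R_wo] := well_ordering_principle {classic K}.
have lt_wf := strict_wf R_wo.
exists (fun i => Group.clone (wreath A5 (tower A5 lt_wf i)) _); split.
- move=> i j nij [f [f_bij _]].
  case: (strict_total R_wo nij) => [lt_ij | lt_ji].
  + case: f_bij => g _ gK.
    exact: (wreath_tower_no_injection a5_gam_neq1 lt_ij (can_inj gK)).
  + exact: (wreath_tower_no_injection a5_gam_neq1 lt_ji (bij_inj f_bij)).
- move=> i; split; last split.
  + exact: (wreath_not_finitely_generated (tower_inhabited A5 lt_wf i) a5_gam_neq1).
  + exact: wreath_not_strongly_bounded.
  + exact: (wreath_SB_generated _ a5_two_conjugates).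
Qed.
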